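(* Let $d\ge 0$ be an integer. There exist an instance domain $\mathcal{X}$ and a hypothesis class $\mathcal{H}$ with Littlestone dimension $\mathrm{Ldim}(\mathcal{H})=d<\infty$ such that the following holds for all integers $k,l\ge 0$: if $k<l+d$, then for any integer $m\ge 0$ there exists a strategy of the adversary, all of whose presented sequences satisfy the $l$-bias assumption with respect to $\mathcal{H}$, that forces any deterministic learning algorithm guaranteeing at most $k$ mistakes (on all sequences satisfying the $l$-bias assumption with respect to $\mathcal{H}$) to have at least $m+1$ nontrivial rounds.
   Context: Online classification with abstention: at each round $t$ the adversary presents $x_t\in\mathcal{X}$, the learner predicts $\hat y_t\in\{-1,+1,\bot\}$ ($\bot$ = abstain), then the adversary reveals $y_t\in\{-1,+1\}$. A mistake is a round with $\hat y_t=-y_t$; a round is nontrivial if the learner makes a mistake or abstains. A deterministic learner's prediction is a deterministic function of the past labeled examples and the current example; the adversary may act adaptively. Hypotheses are maps $\mathcal{X}\to\{-1,+1\}$. For classes, $\mathcal{H}_1\cdot\mathcal{H}_2=\{x\mapsto h_1(x)h_2(x):h_i\in\mathcal{H}_i\}$. $\mathcal{C}^l$ is the class of functions $x\mapsto 1-2I(x\in D)$ for $D\subseteq\mathcal{X}$, $|D|\le l$, and $\mathcal{H}^l=\mathcal{H}\cdot\mathcal{C}^l$. A sequence $(x_1,y_1),\dots,(x_n,y_n)$ satisfies the $l$-bias assumption w.r.t. $\mathcal{H}$ if some $h\in\mathcal{H}^l$ has $h(x_t)=y_t$ for all $t$. The Littlestone dimension $\mathrm{Ldim}(\mathcal{H})$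 is the largest $d$ such that there is a complete binary tree of depth $d$ whose internal nodes are labeled by points of $\mathcal{X}$ such that for every root-to-leaf path (going left means label $-1$, right means $+1$) some $h\in\mathcal{H}$ agrees with all labels along the path. *)

From Stdlib Require Import List.
From mathcomp Require Import all_boot.
Set Implicit Arguments. Unset Strict Implicit. Unset Printing Implicit Defensive.

(* Labels: [true] encodes +1 and [false] encodes -1.
   Predictions: [Some y] is the label y, [None] is abstention (bot). *)

Section OnlineAbstention.
Variable X : Type.

Definition hyp := X -> bool.
Definition hclass := hyp -> Prop.

(* product of two {-1,+1}-valued values: (+1)(+1)=(-1)(-1)=+1 *)
Definition smul (a b : bool) : bool := a == b.

Inductive ltree : Type :=
| LLeaf : ltree
| LNode : X -> ltree -> ltree -> ltree.

Fixpoint complete_depth (t : ltree) (d : nat) : Prop :=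
  match t with
  | LLeaf => d = 0
  | LNode _ l r => exists n, d = n.+1 /\ complete_depth l n /\ complete_depth r n
  end.

(* Every root-to-leaf path of t (left = label -1, right = label +1) is
   realized by some hypothesis satisfying P. *)
Fixpoint shattered (P : hclass) (t : ltree) : Prop :=
  match t with
  | LLeaf => exists h, P h
  | LNode x l r =>
      shattered (fun h => P h /\ h x = false) l /\
      shattered (fun h => P h /\ h x = true) r
  end.

Definition Ldim (H : hclass) (d : nat) : Prop :=
  (exists t, complete_depth t d /\ shattered H t) /\
  (forall t d', complete_depth t d' -> shattered H t -> d' <= d).

(* C^l : x |-> 1 - 2 I(x in D), |D| <= l (D given by a list of size <= l) *)
Definition Cl (l : nat) : hclass :=
  fun c => exists D : seq X, size D <= l /\
           forall x, (c x = false <-> In x D).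

Definition hprod (H1 H2 : hclass) : hclass :=
  fun f => exists h1 h2, H1 h1 /\ H2 h2 /\ forall x, f x = smul (h1 x) (h2 x).

Definition Hl (H : hclass) (l : nat) : hclass := hprod H (Cl l).

Definition lbias (H : hclass) (l : nat) (s : seq (X * bool)) : Prop :=
  exists h, Hl H l h /\ forall p, In p s -> h p.1 = p.2.

Definition learner := seq (X * bool) -> X -> option bool.

Definition round := (X * option bool * bool)%type.

Definition labeled (h : seq round) : seq (X * bool) :=
  map (fun r => (r.1.1, r.2)) h.

Definition is_mistake (p : option bool) (y : bool) : bool := p == Some (~~ y).
Definition is_nontrivial (p : option bool) (y : bool) : bool :=
  (p == None) || is_mistake p y.

Record adversary := Adversary {
  adv_x : seq round -> X;
  adv_y : seq round -> X -> option bool -> bool }.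

(* A general responder (the prediction may depend on the full history). *)
Definition responder := seq round -> X -> option bool.

Definition learner_resp (L : learner) : responder :=
  fun h x => L (labeled h) x.

Fixpoint play (A : adversary) (R : responder) (n : nat) : seq round :=
  match n with
  | 0 => [::]
  | n.+1 =>
      let h := play A R n in
      let x := adv_x A h in
      let p := R h x in
      rcons h (x, p, adv_y A h x p)
  end.

Definition nontrivial_count (h : seq round) : nat :=
  count (fun r => is_nontrivial r.1.2 r.2) h.

Fixpoint mistakes_aux (L : learner) (past : seq (X * bool)) (s : seq (X * bool))
  : nat :=
  match s with
  | [::] => 0
  | (x, y) :: s' =>
      is_mistake (L past x) y + mistakes_aux L (rcons past (x, y)) s'
  end.

Definition mistakes (L : learner) (s : seq (X * bool)) : nat :=
  mistakes_aux L [::] s.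

Definition mistake_bounded (H : hclass) (l k : nat) (L : learner) : Prop :=
  forall s, lbias H l s -> mistakes L s <= k.

End OnlineAbstention.

(** The class [Cl d] of hypotheses with at most [d] negative points has
    Littlestone dimension [d], and under the [l]-bias assumption it allows any
    labelling of distinct points with at most [l + d] negative labels.  The
    adversary presents fresh points and answers [-1] exactly when the learner
    predicts [+1], until [l + d] negative labels have been spent; otherwise it
    answers [+1].  Against a learner making at most [k < l + d] mistakes the
    budget is never exhausted, so every prediction [+1] is a mistake, every
    prediction [-1] is a mistake, and the only alternative is to abstain:
    every round is nontrivial. *)

From Stdlib Require Import List.
From mathcomp Require Import all_boot zify.

Set Implicit Arguments. Unset Strict Implicit.

Lemma InP (T : eqType) (x : T) (s : seq T) : reflect (In x s) (x \in s).
Proof.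
elim: s => [|a s IH]; first by constructor.
rewrite in_cons; apply: (iffP orP) => [[/eqP->|/IH]|[->|/IH]]; by [left | right].
Qed.

Section BoundedNegatives.
Variable X : eqType.

Lemma shattered_inhabited (P : hclass X) (t : ltree X) :
  shattered P t -> exists h, P h.
Proof.
elim: t P => [|x l IHl r IHr] P //=.
by case=> /IHl [h [Ph _]] _; exists h.
Qed.

Lemma Cl_notin (l : nat) (D : seq X) : size D <= l -> Cl l (fun x => x \notin D).
Proof.
by move=> sD; exists D; split=> // x; split=> [/negbFE/InP | /InP ->].
Qed.

(* [S] collects the points already forced negative along the current path. *)
Lemma shattered_Cl_depth_le (d : nat) (t : ltree X) (n : nat) (S : seq X)
    (P : hclass X) :
  complete_depth t n -> shattered P t -> uniq S ->
  (forall h, P h -> Cl d h /\ {in S, forall x, h x = false}) ->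
  n + size S <= d.
Proof.
elim: t n S P => [|x l IHl r IHr] n S P /=.
- move=> -> [h Ph] uS /(_ h Ph) [[D [sD HD]] hS].
  rewrite add0n (leq_trans _ sD) // uniq_leq_size // => y.
  by move/hS/HD/InP.
- move=> [n' [-> [cl cr]]] [sl sr] uS HP.
  have xS : x \notin S.
    apply/negP=> xS; have [h [Ph hx]] := shattered_inhabited sr.
    by have := (HP h Ph).2 x xS; rewrite hx.
  rewrite addSn -addnS -[(size S).+1]/(size (x :: S)).
  apply: IHl cl sl _ _; first by rewrite /= xS.
  move=> h [Ph hx]; have [Clh hS] := HP h Ph; split=> // y.
  by rewrite in_cons => /orP [/eqP->|/hS].
Qed.

End BoundedNegatives.

Fixpoint interval_tree (j k : nat) : ltree nat :=
  match k with
  | 0 => LLeaf _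
  | k'.+1 => LNode j (interval_tree j.+1 k') (interval_tree j.+1 k')
  end.

Lemma interval_tree_depth (j k : nat) : complete_depth (interval_tree j k) k.
Proof. by elim: k j => [|k IH] j //=; exists k. Qed.

Lemma interval_tree_shattered (k j : nat) (P : hclass nat) :
  (forall g : nat -> bool, exists h, P h /\ {in [pred i | j <= i < j + k], h =1 g}) ->
  shattered P (interval_tree j k).
Proof.
elim: k j P => [|k IH] j P HP /=.
  by have [h [Ph _]] := HP (fun _ => true); exists h.
have branch b : shattered (fun h => P h /\ h j = b) (interval_tree j.+1 k).
  apply: IH => g; have [h [Ph Hh]] := HP (fun i => if i == j then b else g i).
  exists h; split.
    by split=> //; rewrite Hh ?eqxx // inE leqnn /=; lia.
  move=> i /andP [ji ik]; rewrite Hh ?inE; last by apply/andP; split; lia.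
  by have -> : (i == j) = false by apply/eqP; lia.
by split; apply: branch.
Qed.

Lemma Ldim_Cl (d : nat) : Ldim (Cl (X:=nat) d) d.
Proof.
split.
  exists (interval_tree 0 d); split; first exact: interval_tree_depth.
  apply: interval_tree_shattered => g.
  pose F := [seq i <- iota 0 d | ~~ g i].
  exists (fun i => i \notin F); split.
    apply: Cl_notin.
    by rewrite size_filter (leq_trans (count_size _ _)) // size_iota.
  by move=> i /andP [_ id]; rewrite mem_filter mem_iota id /=; case: (g i).
move=> t d' td' st; have := shattered_Cl_depth_le td' st (S:=[::]) (erefl _).
by rewrite addn0; apply=> h Ch; split.
Qed.

Section BiasedSequences.
Variables (X : eqType) (l d : nat).

(* Split the negative set [F] into [d] points charged to [Cl d] and the rest to [Cl l]. *)
Lemma Hl_Cl_notin (F : seq X) :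
  uniq F -> size F <= l + d -> Hl (Cl d) l (fun x => x \notin F).
Proof.
move=> uF sF.
exists (fun x => x \notin take d F), (fun x => x \notin drop d F).
split; first by apply: Cl_notin; rewrite size_take; case: ltnP.
split; first by apply: Cl_notin; rewrite size_drop; lia.
have : uniq (take d F ++ drop d F) by rewrite cat_take_drop.
rewrite cat_uniq => /and3P [_ /hasPn disj _].
move=> x; rewrite /smul -{1}(cat_take_drop d F) mem_cat.
by case: (boolP (x \in drop d F)) => [/disj /= /negbTE ->|]; case: (x \in take d F).
Qed.

Lemma uniq_fst_label (s : seq (X * bool)) (x : X) (y1 y2 : bool) :
  uniq (map fst s) -> (x, y1) \in s -> (x, y2) \in s -> y1 = y2.
Proof.
elim: s => [|[a b] s IH] //=; rewrite !in_cons => /andP [as_ us].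
have fresh y : (a, y) \in s -> False by move/(map_f fst); rewrite (negbTE as_).
case/orP=> [/eqP e1|in1] /orP [/eqP e2|in2].
- by case: e1 e2 => _ -> [_ ->].
- by case: e1 in2 => -> _ /fresh.
- by case: e2 in1 => -> _ /fresh.
- exact: IH.
Qed.

Lemma lbias_Cl (s : seq (X * bool)) :
  uniq (map fst s) -> count (fun p => ~~ p.2) s <= l + d -> lbias (Cl d) l s.
Proof.
move=> us cs; pose F := map fst (filter (fun p => ~~ p.2) s).
exists (fun x => x \notin F); split.
  apply: Hl_Cl_notin; last by rewrite size_map size_filter.
  exact: subseq_uniq (map_subseq _ (filter_subseq _ _)) us.
move=> [x [|]] /InP ps /=.
- apply/negP => /mapP [[x' y']]; rewrite mem_filter => /andP [/= y'F ps'] /= ex.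
  by rewrite ex in ps; move: y'F; rewrite -(uniq_fst_label us ps ps').
- by apply: negbF; apply/mapP; exists (x, false); rewrite ?mem_filter.
Qed.

End BiasedSequences.

Lemma mistakes_aux_cat (X : Type) (L : learner X) (past s t : seq (X * bool)) :
  mistakes_aux L past (s ++ t) =
  mistakes_aux L past s + mistakes_aux L (past ++ s) t.
Proof.
elim: s past => [|[x y] s IH] past /=; first by rewrite cats0.
by rewrite IH addnA cat_rcons.
Qed.

Section Play.
Variable X : Type.

Lemma size_play (A : adversary X) (R : responder X) (n : nat) :
  size (play A R n) = n.
Proof. by elim: n => [|n IH] //=; rewrite size_rcons IH. Qed.

Lemma mistakes_play (A : adversary X) (L : learner X) (n : nat) :
  mistakes L (labeled (play A (learner_resp L) n)) =
  count (fun r => is_mistake r.1.2 r.2) (play A (learner_resp L) n).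
Proof.
elim: n => [|n IH] //=.
rewrite /labeled map_rcons -!cats1 /mistakes mistakes_aux_cat count_cat.
by rewrite -/(labeled _) -/(mistakes _ _) IH /= addn0.
Qed.

End Play.

Definition negatives (X : Type) (h : seq (round X)) : nat :=
  count (fun r => ~~ r.2) h.

Definition budget_adversary (B : nat) : adversary nat :=
  Adversary (fun h => size h)
            (fun h _ p => ~~ ((p == Some true) && (negatives h < B))).

Section BudgetAdversary.
Variables (B : nat) (R : responder nat).
Notation play_B := (play (budget_adversary B) R).

Lemma points_play_budget (n : nat) : map fst (labeled (play_B n)) = iota 0 n.
Proof.
elim: n => [|n IH] //=.
by rewrite /labeled !map_rcons IH size_play -cats1 -(iotaD 0 n 1) addn1.
Qed.

Lemma negatives_play_budget (n : nat) : negatives (play_B n) <= B.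
Proof.
elim: n => [|n IH] //=; rewrite /negatives -cats1 count_cat /= -/(negatives _).
by rewrite negbK; case: eqP => //= _; case: ltnP => /=; lia.
Qed.

Lemma negatives_le_mistakes (n : nat) :
  negatives (play_B n) <= count (fun r => is_mistake r.1.2 r.2) (play_B n).
Proof.
elim: n => [|n IH] //=; rewrite /negatives -!cats1 !count_cat /= -/(negatives _).
by case: (R _ _) => [[]|] /=; [case: ltnP => _ /= | |]; lia.
Qed.

(* With the budget never reached, a prediction [+1] is always answered by [-1]. *)
Lemma budget_play_nontrivial (n : nat) :
  (forall i, count (fun r => is_mistake r.1.2 r.2) (play_B i) < B) ->
  all (fun r => is_nontrivial r.1.2 r.2) (play_B n).
Proof.
move=> below; elim: n => [|n IH] //=; rewrite all_rcons IH andbT /=.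
rewrite /is_nontrivial /is_mistake negbK.
have -> : negatives (play_B n) < B := leq_ltn_trans (negatives_le_mistakes n) (below n).
by case: (R _ _) => [[]|].
Qed.

End BudgetAdversary.

Lemma lbias_play_budget (l d : nat) (R : responder nat) (n : nat) :
  lbias (Cl d) l (labeled (play (budget_adversary (l + d)) R n)).
Proof.
apply: lbias_Cl; first by rewrite points_play_budget iota_uniq.
by rewrite count_map; exact: negatives_play_budget.
Qed.

Theorem mainTheorem2 (d : nat) :
  exists (X : Type) (H : hclass X),
    Ldim H d /\
    forall k l : nat, k < l + d ->
    forall m : nat,
      exists A : adversary X,
        (forall (R : responder X) (n : nat), lbias H l (labeled (play A R n))) /\
        (forall L : learner X, mistake_bounded H l k L ->
           exists n : nat, m < nontrivial_count (play A (learner_resp L) n)).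
Proof.
exists nat, (Cl d); split; first exact: Ldim_Cl.
move=> k l ltk m; exists (budget_adversary (l + d)).
split; first exact: lbias_play_budget.
move=> L bounded; exists m.+1.
have below i : count (fun r => is_mistake r.1.2 r.2)
                 (play (budget_adversary (l + d)) (learner_resp L) i) < l + d.
  by rewrite -mistakes_play (leq_ltn_trans (bounded _ (lbias_play_budget _ _ _ _))).
move: (budget_play_nontrivial m.+1 below); rewrite all_count => /eqP.
by rewrite /nontrivial_count => ->; rewrite size_play.
Qed.
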